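(* Let $\Omega$ be a finite nonempty set, $\mathcal{A}=2^\Omega$, and let $\mu$ be a $q$-measure on $\mathcal{A}$. If $\phi$ and $\psi$ are quadratic coevents on $\mathcal{A}$ that are both 1-generated by $\mu$, then $\phi=\psi$.
   Context: Let $\Omega$ be a finite nonempty set and $\mathcal{A}=2^\Omega$. A coevent is a map $\phi:\mathcal{A}\to\{0,1\}$ with $\phi(\emptyset)=0$. A coevent $\phi$ is quadratic if for all pairwise disjoint $A,B,C\in\mathcal{A}$: $\phi(A\cup B\cup C)=\phi(A\cup B)\oplus\phi(A\cup C)\oplus\phi(B\cup C)\oplus\phi(A)\oplus\phi(B)\oplus\phi(C)$, where $\oplus$ is addition mod 2. For $f:\Omega\to[0,\infty)$ and a coevent $\phi$, the $q$-integral is $\int f\,d\phi=\int_0^\infty \phi(\{\omega\in\Omega: f(\omega)>\lambda\})\,d\lambda$ (Lebesgue measure in $\lambda$), and for $A\in\mathcal{A}$, $\int_A f\,d\phi=\int f\chi_A\,d\phi$. A $q$-measure is a map $\mu:\mathcal{A}\to[0,\infty)$ such that for all pairwise disjoint $A,B,C\in\mathcal{A}$: $\mu(A\cup B\cup C)=\mu(A\cup B)+\mu(A\cup C)+\mu(B\cup C)-\mu(A)-\mu(B)-\mu(C)$. The $q$-measure $\mu$ 1-generates $\phi$ if there is a function $f:\Omega\to(0,\infty)$ with $\mu(A)=\int_A f\,d\phi$ for all $A\in\mathcal{A}$. *)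

From mathcomp Require Import all_boot.
From Stdlib Require Import Reals.
Set Implicit Arguments. Unset Strict Implicit. Unset Printing Implicit Defensive.

Local Open Scope R_scope.

Definition Rltb (x y : R) : bool := if Rlt_dec x y then true else false.

(* coevent: phi : 2^Omega -> {0,1} (booleans, true = 1) with phi(empty) = 0 *)
Definition coevent (T : finType) (phi : {set T} -> bool) : Prop :=
  phi set0 = false.

Definition quadratic (T : finType) (phi : {set T} -> bool) : Prop :=
  forall A B C : {set T},
    [disjoint A & B] -> [disjoint A & C] -> [disjoint B & C] ->
    phi (A :|: B :|: C) =
      xorb (xorb (xorb (xorb (xorb (phi (A :|: B)) (phi (A :|: C)))
                               (phi (B :|: C))) (phi A)) (phi B)) (phi C).

Definition qmeasure (T : finType) (mu : {set T} -> R) : Prop :=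
  (forall A, 0 <= mu A) /\
  forall A B C : {set T},
    [disjoint A & B] -> [disjoint A & C] -> [disjoint B & C] ->
    mu (A :|: B :|: C) =
      mu (A :|: B) + mu (A :|: C) + mu (B :|: C) - mu A - mu B - mu C.

Definition level (T : finType) (phi : {set T} -> bool) (f : T -> R) (l : R) : R :=
  if phi [set w | Rltb l (f w)] then 1 else 0.

(* r is the q-integral  \int_0^\infty phi({f > lambda}) d lambda.
   For f >= 0 on a finite set the integrand vanishes for lambda >= max f
   (phi(empty)=0), so the integral over [0,oo) is the integral over [0,M]
   for any M >= max f, M >= 0; the integrand is a step function, so the
   Riemann integral coincides with the Lebesgue integral. *)
Definition is_qint (T : finType) (phi : {set T} -> bool) (f : T -> R) (r : R) : Prop :=
  forall M : R, 0 <= M -> (forall w, f w <= M) ->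
    exists pr : Riemann_integrable (level phi f) 0 M, RiemannInt pr = r.

Definition restr (T : finType) (f : T -> R) (A : {set T}) : T -> R :=
  fun w => if w \in A then f w else 0.

Definition one_generates (T : finType) (mu : {set T} -> R) (phi : {set T} -> bool) : Prop :=
  exists f : T -> R, (forall w, 0 < f w) /\
    forall A : {set T}, is_qint phi (restr f A) (mu A).

(** A 1-generating density f can be read off the measure of singletons and
    pairs: the q-integral of f over {w} is f(w) phi{w}, and over {a,b} with
    f(a) <= f(b) it is f(a) phi{a,b} + (f(b) - f(a)) phi{b}.  Since f > 0,
    these identities determine phi on all sets with at most two points from
    mu alone, independently of f.  A quadratic coevent is in turn determined
    by its values on such sets, because the quadratic rule expresses
    phi({a} u {b} u R) through phi on strictly smaller sets. *)

From mathcomp Require Import all_boot zify.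
From Stdlib Require Import Reals Lra FunctionalExtensionality.
From Coquelicot Require Import Coquelicot.

Set Implicit Arguments.
Unset Strict Implicit.

(* Coquelicot opens [R_scope] globally; the combinatorial part is about nat. *)
Close Scope R_scope.

Lemma quadratic_eq_small (T : finType) (phi psi : {set T} -> bool) :
  quadratic phi -> quadratic psi ->
  (forall A : {set T}, #|A| <= 2 -> phi A = psi A) -> phi = psi.
Proof.
move=> qphi qpsi small; apply: functional_extensionality => A.
elim: {A}_.+1 {-2}A (ltnSn #|A|) => // n IHn A; rewrite ltnS => leAn.
have [|lt2A] := leqP #|A| 2; first exact: small.
have /card_gt0P [a Aa] : 0 < #|A| by lia.
have cardA := cardsD1 a A; rewrite Aa /= in cardA.
have /card_gt0P [b A'b] : 0 < #|A :\ a| by lia.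
have cardA' := cardsD1 b (A :\ a); rewrite A'b /= in cardA'.
set R := A :\ a :\ b in cardA' *.
have defA : A = [set a] :|: [set b] :|: R by rewrite -setUA !setD1K.
have ab : a != b by move: A'b; rewrite !inE eq_sym => /andP [].
have aR : a \notin R by rewrite !inE eqxx andbF.
have bR : b \notin R by rewrite !inE eqxx.
have dab : [disjoint [set a] & [set b]] by rewrite disjoints1 inE.
have daR : [disjoint [set a] & R] by rewrite disjoints1.
have dbR : [disjoint [set b] & R] by rewrite disjoints1.
rewrite defA (qphi _ _ _ dab daR dbR) (qpsi _ _ _ dab daR dbR).
rewrite !(small [set _]) ?cards1 // (small [set a; b]) ?cards2 ?ab //.
have lt_aR : #|[set a] :|: R| < n by rewrite cardsU1 aR; lia.
have lt_bR : #|[set b] :|: R| < n by rewrite cardsU1 bR; lia.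
have lt_R : #|R| < n by lia.
by rewrite (IHn _ lt_aR) (IHn _ lt_bR) (IHn _ lt_R).
Qed.

Lemma eq_bool_iff (b c : bool) (P : Prop) : (b <-> P) -> (c <-> P) -> b = c.
Proof. by move=> bP cP; apply/idP/idP => [/bP/cP|/cP/bP]. Qed.

Open Scope R_scope.

Lemma RltbP x y : reflect (x < y) (Rltb x y).
Proof. by rewrite /Rltb; case: Rlt_dec => ?; constructor. Qed.

Lemma is_RInt_const_on (h : R -> R) (a b v : R) :
  a <= b -> (forall x, a < x < b -> h x = v) -> is_RInt h a b ((b - a) * v).
Proof.
move=> le_ab hv; apply: (is_RInt_ext (fun _ => v)).
  by move=> x; rewrite Rmin_left ?Rmax_right // => /hv.
exact: (@is_RInt_const R_NormedModule).
Qed.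

Lemma is_RInt_step2 (h : R -> R) (a b c v1 v2 : R) :
  a <= b -> b <= c ->
  (forall x, a < x < b -> h x = v1) -> (forall x, b < x < c -> h x = v2) ->
  is_RInt h a c ((b - a) * v1 + (c - b) * v2).
Proof.
move=> le_ab le_bc h1 h2.
by apply: (@is_RInt_Chasles R_NormedModule _ _ b); apply: is_RInt_const_on.
Qed.

Lemma is_qint_is_RInt (T : finType) (phi : {set T} -> bool) (g : T -> R) r M v :
  is_qint phi g r -> 0 <= M -> (forall w, g w <= M) ->
  is_RInt (level phi g) 0 M v -> r = v.
Proof.
move=> qint M_ge0 le_gM int_v; have [pr <-] := qint M M_ge0 le_gM.
by rewrite -RInt_Reals; apply: is_RInt_unique.
Qed.

Definition b2R (b : bool) : R := if b then 1 else 0.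

Lemma level_restr (T : finType) (phi : {set T} -> bool) (f : T -> R) A l :
  0 < l -> level phi (restr f A) l = b2R (phi [set w in A | Rltb l (f w)]).
Proof.
move=> l_gt0; congr (if phi _ then _ else _); apply/setP => w.
rewrite !inE /restr; case: (w \in A) => //=.
by apply/negbTE/RltbP; lra.
Qed.

(* The value of phi on {a,b} in terms of its values on {a}, {b} and the
   measures of {a}, {b}, {a,b}, as forced by 1-generation. *)
Definition pair_spec (pa pb : bool) (ma mb m : R) : Prop :=
  match pa, pb with
  | false, false => m <> 0
  | true, false => m = ma
  | false, true => m = mb
  | true, true => m = Rmax ma mb
  end.

Lemma pair_specC pa pb ma mb m : pair_spec pa pb ma mb m <-> pair_spec pb pa mb ma m.
Proof. by case: pa; case: pb => //=; rewrite Rmax_comm. Qed.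

Section OneGenerated.

Variables (T : finType) (mu : {set T} -> R) (phi : {set T} -> bool) (f : T -> R).
Hypotheses (f_gt0 : forall w, 0 < f w)
  (mu_qint : forall A, is_qint phi (restr f A) (mu A)).

Lemma mu_set1 w : mu [set w] = f w * b2R (phi [set w]).
Proof.
have fw := f_gt0 w.
have int_w : is_RInt (level phi (restr f [set w])) 0 (f w)
    ((f w - 0) * b2R (phi [set w]) + (f w - f w) * 0).
  apply: is_RInt_step2 => [|| x x_in | x]; try lra.
  rewrite level_restr; last lra.
  congr (b2R (phi _)); apply/setP => v; rewrite !inE.
  by case: eqP => [->|] //=; apply/RltbP; lra.
rewrite (is_qint_is_RInt (@mu_qint [set w]) _ _ int_w); first by ring.
  lra.
by move=> v; rewrite /restr inE; case: eqP => [->|_]; lra.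
Qed.

Lemma phi_set1 w : phi [set w] <-> mu [set w] <> 0.
Proof.
have fw := f_gt0 w; rewrite mu_set1 /b2R.
by case: (phi [set w]); split => // h; lra.
Qed.

Lemma mu_set2 a b : a != b -> f a <= f b ->
  mu [set a; b] = f a * b2R (phi [set a; b]) + (f b - f a) * b2R (phi [set b]).
Proof.
move=> ab le_fab; have fa := f_gt0 a; have fb := f_gt0 b.
(* The level sets are {a,b} on (0, f a) and {b} on (f a, f b). *)
have int_ab : is_RInt (level phi (restr f [set a; b])) 0 (f b)
    ((f a - 0) * b2R (phi [set a; b]) + (f b - f a) * b2R (phi [set b])).
  apply: is_RInt_step2 => [|| x x_in | x x_in]; try lra;
    rewrite level_restr; try lra.
  - congr (b2R (phi _)); apply/setP => v; rewrite !inE.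
    by case: eqP => [->|_]; [|case: eqP => [->|_]] => //=;
      rewrite ?orbT; apply/RltbP; lra.
  - congr (b2R (phi _)); apply/setP => v; rewrite !inE.
    case: eqP => [->|_]; first by rewrite /= (negbTE ab); apply/negbTE/RltbP; lra.
    by case: eqP => [->|_] //=; apply/RltbP; lra.
rewrite (is_qint_is_RInt (@mu_qint [set a; b]) _ _ int_ab); first by ring.
  lra.
move=> v; rewrite /restr; case: ifP => [|_]; last lra.
by rewrite !inE => /orP [] /eqP ->; lra.
Qed.

Lemma phi_set2_le a b : a != b -> f a <= f b ->
  phi [set a; b] <->
  pair_spec (phi [set a]) (phi [set b]) (mu [set a]) (mu [set b]) (mu [set a; b]).
Proof.
move=> ab le_fab; have fa := f_gt0 a; have fb := f_gt0 b.
rewrite (mu_set2 ab le_fab) !mu_set1 /b2R.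
case: (phi [set a; b]); case: (phi [set a]); case: (phi [set b]) => /=;
  rewrite ?Rmax_right; try lra; split => // h; try move=> ?; lra || (exfalso; lra).
Qed.

Lemma phi_set2 a b : a != b ->
  phi [set a; b] <->
  pair_spec (phi [set a]) (phi [set b]) (mu [set a]) (mu [set b]) (mu [set a; b]).
Proof.
move=> ab; have [le_fab|lt_fba] := Rle_lt_dec (f a) (f b); first exact: phi_set2_le.
rewrite pair_specC setUC; apply: phi_set2_le; first by rewrite eq_sym.
lra.
Qed.

End OneGenerated.

Close Scope R_scope.

Lemma one_generates_eq_small (T : finType) (mu : {set T} -> R)
    (phi psi : {set T} -> bool) :
  coevent phi -> coevent psi -> one_generates mu phi -> one_generates mu psi ->
  forall A : {set T}, #|A| <= 2 -> phi A = psi A.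
Proof.
move=> phi0 psi0 [f [f_gt0 phi_int]] [g [g_gt0 psi_int]].
have eq1 w : phi [set w] = psi [set w].
  exact: eq_bool_iff (phi_set1 f_gt0 phi_int w) (phi_set1 g_gt0 psi_int w).
move=> A; rewrite leq_eqVlt => /orP [/cards2P [a [b [ab ->]]]|].
  apply: eq_bool_iff (phi_set2 f_gt0 phi_int ab) _.
  by rewrite !eq1; exact (phi_set2 g_gt0 psi_int ab).
rewrite ltnS leq_eqVlt => /orP [/cards1P [w ->] //|].
by rewrite ltnS leqn0 => /eqP/cards0_eq ->; rewrite phi0 psi0.
Qed.

Theorem theorem5p2 (Omega : finType) (HOmega : (0 < #|Omega|)%N)
  (mu : {set Omega} -> R) (Hmu : qmeasure mu)
  (phi psi : {set Omega} -> bool)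
  (Hphi_co : coevent phi) (Hphi_q : quadratic phi)
  (Hpsi_co : coevent psi) (Hpsi_q : quadratic psi)
  (Gphi : one_generates mu phi) (Gpsi : one_generates mu psi) :
  phi = psi.
Proof.
apply: quadratic_eq_small => //.
exact: one_generates_eq_small Gphi Gpsi.
Qed.
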